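(* For every integer $n\ge4$ there is an antiprismatic octahedron $AP_{3,4}^n$ in hyperbolic space: there is a compact regular octahedron $Q$, concentric with the $n$-akis truncated octahedron $KP_{3,4}^n$ which tiles $\mathbb{H}^3$ and lying inside it with its faces parallel to the hexagonal faces of $KP_{3,4}^n$, such that the regular antiprisms attached to the faces of $Q$ are symmetric with respect to the reflection-rotations at the hexagonal faces of $KP_{3,4}^n$.
   Context: $KP_{3,4}^n$ is a hyperbolic truncated octahedron (regular square and hexagonal faces) with pyramids $PY_4^n$ (regular square base, dihedral angle $2\pi/n$ between adjacent triangular sides, rotationally symmetric) glued to its square faces, with dimensions chosen so that $\alpha+2\beta+2\gamma=2\pi$ ($\alpha$: angle between hexagonal faces, $\beta$: between square and hexagonal faces, $\gamma$: between base and side of the pyramid); it is then a fundamental domain for the group $R_{3,4}^n$ generated by reflection-rotations: reflection in the plane of a hexagonal face followed by rotation by $\pi/3$ about the axis perpendicular through the center of that face. A regular antiprism over a face $F$ of $Q$ has $F$ as bottom, a top triangle $F'$, and lateral faces which are equilateral triangles with all edges of the same length as the edges of $F$; ''symmetric'' means $F'$ is the image of $F$ under the reflection-rotation at the corresponding hexagonal face. The antiprismatic octahedron $AP_{3,4}^n$ is the union of the images of the lateral triangles under $R_{3,4}^n$. *)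

From Stdlib Require Import Reals Lra List Permutation.
Open Scope R_scope.

Record pt := mkpt { c0 : R; c1 : R; c2 : R; c3 : R }.

Definition mink (x y : pt) : R :=
  - c0 x * c0 y + c1 x * c1 y + c2 x * c2 y + c3 x * c3 y.

Definition vadd (x y : pt) : pt :=
  mkpt (c0 x + c0 y) (c1 x + c1 y) (c2 x + c2 y) (c3 x + c3 y).
Definition vscale (k : R) (x : pt) : pt :=
  mkpt (k * c0 x) (k * c1 x) (k * c2 x) (k * c3 x).

Definition inH3 (x : pt) : Prop := mink x x = -1 /\ 0 < c0 x.

Definition origin : pt := mkpt 1 0 0 0.

Definition arcosh (u : R) : R := ln (u + sqrt (u * u - 1)).
Definition hdist (x y : pt) : R := arcosh (- mink x y).

Definition refl (n x : pt) : pt :=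
  vadd x (vscale (- (2 * mink x n / mink n n)) n).

(** Rotation by angle th about the geodesic through [origin] with (Euclidean
    unit) spatial direction (d1,d2,d3): Rodrigues' formula on the spatial part. *)
Definition rot (d1 d2 d3 th : R) (x : pt) : pt :=
  let v1 := c1 x in let v2 := c2 x in let v3 := c3 x in
  let dv := d1 * v1 + d2 * v2 + d3 * v3 in
  let w1 := d2 * v3 - d3 * v2 in
  let w2 := d3 * v1 - d1 * v3 in
  let w3 := d1 * v2 - d2 * v1 in
  mkpt (c0 x)
    (cos th * v1 + sin th * w1 + (1 - cos th) * dv * d1)
    (cos th * v2 + sin th * w2 + (1 - cos th) * dv * d2)
    (cos th * v3 + sin th * w3 + (1 - cos th) * dv * d3).

(** Interior dihedral angle between two faces of a convex polyhedron with
    outward normals n1, n2 (spacelike):  cos = - <n1,n2> / (|n1| |n2|). *)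
Definition dihedral (n1 n2 : pt) : R :=
  acos (- mink n1 n2 / sqrt (mink n1 n1 * mink n2 n2)).

Definition opp (n : pt) : pt := vscale (-1) n.

Definition is_sign (s : R) : Prop := s = 1 \/ s = -1.

(** The regular hyperbolic truncated octahedron centred at [origin], of
    size parameter p > 0: its 24 vertices are (tp, signed permutations of
    (0,p,2p)) with tp = sqrt(1+5p^2); all its edges have the same length
    and its square and hexagonal faces are regular. *)
Definition tp (p : R) : R := sqrt (1 + 5 * p ^ 2).

Definition hexN (p s1 s2 s3 : R) : pt := mkpt (3 * p / tp p) s1 s2 s3.
Definition sqN3 (p : R) : pt := mkpt (2 * p / tp p) 0 0 1.

Definition inTO (p : R) (x : pt) : Prop :=
  inH3 x /\
  Rabs (c1 x) <= 2 * p / tp p * c0 x /\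
  Rabs (c2 x) <= 2 * p / tp p * c0 x /\
  Rabs (c3 x) <= 2 * p / tp p * c0 x /\
  (forall s1 s2 s3, is_sign s1 -> is_sign s2 -> is_sign s3 ->
     mink x (hexN p s1 s2 s3) <= 0).

Definition alphaTO (p : R) : R := dihedral (hexN p 1 1 1) (hexN p 1 1 (-1)).
Definition betaTO (p : R) : R := dihedral (hexN p 1 1 1) (sqN3 p).

(** Vertices of the square face +e3: (tp, ±p, 0, 2p), (tp, 0, ±p, 2p);
    its centre lies on the ray through (tp,0,0,2p). *)
Definition sqV1 (p : R) : pt := mkpt (tp p) p 0 (2 * p).
Definition sqCentreDir (p : R) : pt := mkpt (tp p) 0 0 (2 * p).

(** The rotationally symmetric pyramid glued on the square face +e3.  Its
    four lateral planes are the images under the symmetries of the square of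
    the plane with normal (a,b,b,c), which contains the edge
    (tp,p,0,2p)-(tp,0,p,2p).
    The apex is the (projective) common point of these planes, (c,0,0,a);
    it may be a finite, ideal or hyperideal point; it must lie on the ray
    from the centre through the square face, beyond that face. *)
Definition sideN (a b c e1 e2 : R) : pt := mkpt a (e1 * b) (e2 * b) c.

Definition inPyr3 (p a b c : R) (y : pt) : Prop :=
  inH3 y /\ 0 <= mink y (sqN3 p) /\
  (forall e1 e2, is_sign e1 -> is_sign e2 -> mink y (sideN a b c e1 e2) <= 0).

(** Moving the square face (axis i, sign sg) to the square face +e3. *)
Definition frame (i : nat) (sg : R) (x : pt) : pt :=
  match i with
  | 1%nat => mkpt (c0 x) (c2 x) (c3 x) (sg * c1 x)
  | 2%nat => mkpt (c0 x) (c3 x) (c1 x) (sg * c2 x)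
  | _ => mkpt (c0 x) (c1 x) (c2 x) (sg * c3 x)
  end.

Definition inKP (p a b c : R) (x : pt) : Prop :=
  inTO p x \/
  exists i sg, (i = 1 \/ i = 2 \/ i = 3)%nat /\ is_sign sg /\
               inPyr3 p a b c (frame i sg x).

Definition gammaPY (p a b c : R) : R := dihedral (opp (sqN3 p)) (sideN a b c 1 1).

Definition isKP (n : nat) (p a b c : R) : Prop :=
  0 < p /\
  (* the lateral plane contains the square edge (tp,p,0,2p)-(tp,0,p,2p) *)
  mink (sqV1 p) (sideN a b c 1 1) = 0 /\
  0 < mink (sideN a b c 1 1) (sideN a b c 1 1) /\
  (* the normal is outward: the centre of the base is on the inner side *)
  mink (sqCentreDir p) (sideN a b c 1 1) < 0 /\
  (* the apex (c,0,0,a) lies on the ray through the square face, beyond it *)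
  0 < c /\ 2 * p / tp p * c < a /\
  dihedral (sideN a b c 1 1) (sideN a b c (-1) 1) = 2 * PI / INR n /\
  alphaTO p + 2 * betaTO p + 2 * gammaPY p a b c = 2 * PI.

Definition reflrot (p s1 s2 s3 : R) (x : pt) : pt :=
  rot (s1 / sqrt 3) (s2 / sqrt 3) (s3 / sqrt 3) (PI / 3) (refl (hexN p s1 s2 s3) x).

(** Regular octahedron centred at [origin] with vertices on the coordinate
    axes at distance r (so its faces are parallel to the hexagonal faces of
    KP, i.e. perpendicular to the axes (±1,±1,±1)).  Region = hyperbolic
    convex hull of the 6 vertices (cosh r, ± sinh r e_i). *)
Definition inQ (r : R) (x : pt) : Prop :=
  inH3 x /\ Rabs (c1 x) + Rabs (c2 x) + Rabs (c3 x) <= tanh r * c0 x.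

Definition qv1 (r s1 : R) : pt := mkpt (cosh r) (s1 * sinh r) 0 0.
Definition qv2 (r s2 : R) : pt := mkpt (cosh r) 0 (s2 * sinh r) 0.
Definition qv3 (r s3 : R) : pt := mkpt (cosh r) 0 0 (s3 * sinh r).

(** (a1,a2,a3) bottom, (b1,b2,b3) top of a regular antiprism, listed so that
    the lateral band is the zig-zag a1 b1 a2 b2 a3 b3: all 12 edges
    (3 bottom, 3 top, 6 lateral) have the same positive length. *)
Definition zigzag (a1 a2 a3 b1 b2 b3 : pt) : Prop :=
  let s := hdist a1 a2 in
  0 < s /\
  hdist a2 a3 = s /\ hdist a3 a1 = s /\
  hdist b1 b2 = s /\ hdist b2 b3 = s /\ hdist b3 b1 = s /\
  hdist a1 b1 = s /\ hdist b1 a2 = s /\ hdist a2 b2 = s /\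
  hdist b2 a3 = s /\ hdist a3 b3 = s /\ hdist b3 a1 = s.

Definition regular_antiprism (v1 v2 v3 w1 w2 w3 : pt) : Prop :=
  exists a1 a2 a3 b1 b2 b3,
    Permutation (v1 :: v2 :: v3 :: nil) (a1 :: a2 :: a3 :: nil) /\
    Permutation (w1 :: w2 :: w3 :: nil) (b1 :: b2 :: b3 :: nil) /\
    zigzag a1 a2 a3 b1 b2 b3.

From Pilot Require Import Defs.
From Stdlib Require Import Reals Lra Nsatz List Permutation.
Open Scope R_scope.

(* Write v_i = (cosh r, sinh r f_i) for the vertices of the face of Q in
   direction s, with f_i = s_i e_i, and N = (m, s) with m = 3p/tp p for the
   normal of the hexagonal face.  The reflection-rotation rho is an isometry,
   so the top triangle rho(v_i) is congruent to the bottom one.  Since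
   rho v_j = R (v_j + k N) with R the rotation by pi/3 about s, which fixes N,
     <v_i, rho v_j> = - cosh^2 r + k (sinh r - m cosh r) + sinh^2 r (f_i . R f_j),
   and f_i . R f_j = 2/3 exactly for i = j and for one cyclic shift of the
   other pairs, the shift being fixed by the orientation s1 s2 s3.  The six
   lateral edges thus have the length of the sides iff
   k (sinh r - m cosh r) = - 2/3 sinh^2 r, that is
   3 (tanh r - m)^2 = tanh^2 r (3 - m^2).  Its smaller root satisfies
   tanh r <= 2p/tp p, so Q already lies in the truncated octahedron; neither
   n nor the pyramids play a role. *)

Lemma sign_sqr (s : R) : is_sign s -> s * s = 1.
Proof. intros [-> | ->]; ring. Qed.

Lemma sign_mul (s u : R) : is_sign s -> is_sign u -> is_sign (s * u).
Proof. intros [-> | ->] [-> | ->]; [left | right | right | left]; ring. Qed.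

Lemma sign_mul_le_abs (s x : R) : is_sign s -> s * x <= Rabs x.
Proof.
  intros [-> | ->].
  - rewrite Rmult_1_l; apply Rle_abs.
  - replace (-1 * x) with (- x) by ring. rewrite <- Rabs_Ropp. apply Rle_abs.
Qed.

Lemma cosh_sqr_sub_sinh_sqr (x : R) : cosh x * cosh x - sinh x * sinh x = 1.
Proof.
  unfold cosh, sinh.
  assert (e : exp x * exp (- x) = 1) by (rewrite <- exp_plus, Rplus_opp_r; apply exp_0).
  field_simplify. lra.
Qed.

Lemma cosh_pos (x : R) : 0 < cosh x.
Proof.
  unfold cosh; pose proof (exp_pos x); pose proof (exp_pos (- x)); lra.
Qed.

Lemma sinh_eq_tanh_mul_cosh (x : R) : sinh x = tanh x * cosh x.
Proof. unfold tanh; pose proof (cosh_pos x); field; lra. Qed.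

Lemma one_lt_cosh_sqr (x : R) : 0 < x -> 1 < cosh x * cosh x.
Proof.
  intro hx. pose proof (sinh_lt 0 x hx) as hs. rewrite sinh_0 in hs.
  pose proof (cosh_sqr_sub_sinh_sqr x). nra.
Qed.

Lemma exists_tanh_eq (T : R) : 0 < T < 1 -> exists r, 0 < r /\ tanh r = T.
Proof.
  intros hT. set (D := sqrt (1 - T * T)).
  assert (hD2 : D * D = 1 - T * T) by (apply sqrt_sqrt; nra).
  assert (hD : 0 < D) by (apply sqrt_lt_R0; nra).
  exists (arcsinh (T / D)). split.
  - rewrite <- arcsinh_0. apply arcsinh_lt, Rdiv_lt_0_compat; lra.
  - set (r := arcsinh (T / D)).
    assert (hs : sinh r = T / D) by apply sinh_arcsinh.
    assert (hcD : (cosh r * D) * (cosh r * D) = 1).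
    { replace ((cosh r * D) * (cosh r * D)) with
        ((cosh r * cosh r - sinh r * sinh r) * (D * D) + (sinh r * D) * (sinh r * D)) by ring.
      rewrite cosh_sqr_sub_sinh_sqr, hs, hD2. field. lra. }
    assert (hc : cosh r = / D).
    { assert (0 < cosh r * D) by (apply Rmult_lt_0_compat; [apply cosh_pos | lra]).
      apply (Rmult_eq_reg_r D); [|lra]. rewrite Rinv_l by lra. nra. }
    unfold tanh. rewrite hs, hc. field. lra.
Qed.

Lemma arcosh_pos (u : R) : 1 < u -> 0 < arcosh u.
Proof.
  intro hu. unfold arcosh. rewrite <- ln_1. apply ln_increasing; [lra|].
  pose proof (sqrt_pos (u * u - 1)). lra.
Qed.

Lemma mink_comm (x y : pt) : mink x y = mink y x.
Proof. unfold mink. ring. Qed.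

Lemma mink_refl (n x y : pt) :
  mink n n <> 0 -> mink (refl n x) (refl n y) = mink x y.
Proof.
  destruct n, x, y. unfold refl, mink, vadd, vscale; simpl. intro h. field. exact h.
Qed.

Lemma mink_rot (d1 d2 d3 th : R) (x y : pt) :
  d1 * d1 + d2 * d2 + d3 * d3 = 1 ->
  mink (rot d1 d2 d3 th x) (rot d1 d2 d3 th y) = mink x y.
Proof.
  intro hd. pose proof (sin2_cos2 th) as hsc. unfold Rsqr in hsc.
  destruct x, y. unfold rot, mink; simpl. nsatz.
Qed.

Lemma zigzag_of_mink (K : R) (a1 a2 a3 b1 b2 b3 : pt) :
  1 < K ->
  mink a1 a2 = - K -> mink a2 a3 = - K -> mink a3 a1 = - K ->
  mink b1 b2 = - K -> mink b2 b3 = - K -> mink b3 b1 = - K ->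
  mink a1 b1 = - K -> mink b1 a2 = - K -> mink a2 b2 = - K ->
  mink b2 a3 = - K -> mink a3 b3 = - K -> mink b3 a1 = - K ->
  zigzag a1 a2 a3 b1 b2 b3.
Proof.
  intros hK e1 e2 e3 e4 e5 e6 e7 e8 e9 e10 e11 e12.
  unfold zigzag, hdist. rewrite e1, e2, e3, e4, e5, e6, e7, e8, e9, e10, e11, e12.
  rewrite Ropp_involutive. repeat split. now apply arcosh_pos.
Qed.

Lemma regular_antiprism_of_zigzag (v1 v2 v3 w1 w2 w3 : pt) :
  zigzag v1 v2 v3 w1 w2 w3 -> regular_antiprism v1 v2 v3 w1 w2 w3.
Proof.
  intro h. exists v1, v2, v3, w1, w2, w3.
  split; [apply Permutation_refl | split; [apply Permutation_refl | exact h]].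
Qed.

Lemma regular_antiprism_of_zigzag_rot (v1 v2 v3 w1 w2 w3 : pt) :
  zigzag v1 v2 v3 w2 w3 w1 -> regular_antiprism v1 v2 v3 w1 w2 w3.
Proof.
  intro h. exists v1, v2, v3, w2, w3, w1.
  split; [apply Permutation_refl | split; [| exact h]].
  apply (Permutation_cons_append (w2 :: w3 :: nil) w1).
Qed.

Definition hex_time (p : R) : R := 3 * p / tp p.

Lemma tp_sqr (p : R) : tp p * tp p = 1 + 5 * p ^ 2.
Proof. apply sqrt_sqrt. nra. Qed.

Lemma tp_pos (p : R) : 0 < tp p.
Proof. apply sqrt_lt_R0. nra. Qed.

Lemma mink_hexN_self (p s1 s2 s3 : R) :
  is_sign s1 -> is_sign s2 -> is_sign s3 ->
  mink (hexN p s1 s2 s3) (hexN p s1 s2 s3) = 3 - hex_time p ^ 2.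
Proof.
  intros h1 h2 h3. unfold mink, hexN, hex_time; simpl.
  rewrite (sign_sqr s1), (sign_sqr s2), (sign_sqr s3) by assumption. ring.
Qed.

Lemma hex_time_sqr_lt_3 (p : R) : hex_time p ^ 2 < 3.
Proof.
  pose proof (tp_sqr p). pose proof (tp_pos p). unfold hex_time.
  replace ((3 * p / tp p) ^ 2) with (9 * p ^ 2 / (tp p * tp p)) by (field; lra).
  apply (Rmult_lt_reg_r (tp p * tp p)); [nra|].
  unfold Rdiv. rewrite Rmult_assoc, Rinv_l by nra. nra.
Qed.

Lemma mink_reflrot (p s1 s2 s3 : R) (x y : pt) :
  is_sign s1 -> is_sign s2 -> is_sign s3 ->
  mink (reflrot p s1 s2 s3 x) (reflrot p s1 s2 s3 y) = mink x y.
Proof.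
  intros h1 h2 h3. unfold reflrot. rewrite mink_rot.
  - apply mink_refl. rewrite mink_hexN_self by assumption.
    pose proof (hex_time_sqr_lt_3 p). lra.
  - assert (e : sqrt 3 * sqrt 3 = 3) by (apply sqrt_sqrt; lra).
    assert (sqrt 3 <> 0) by (intro z; rewrite z in e; lra).
    transitivity ((s1 * s1 + s2 * s2 + s3 * s3) / (sqrt 3 * sqrt 3)); [field; assumption|].
    rewrite !sign_sqr, e by assumption. field.
Qed.

Lemma inQ_inTO (p r : R) (x : pt) :
  0 <= p -> tanh r <= 2 * p / tp p -> inQ r x -> inTO p x.
Proof.
  intros hp hT [hx hQ]. pose proof (tp_pos p).
  assert (hx0 : 0 < c0 x) by apply hx.
  assert (hT2 : tanh r * c0 x <= 2 * p / tp p * c0 x) by (apply Rmult_le_compat_r; lra).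
  assert (hT3 : 2 * p / tp p * c0 x <= 3 * p / tp p * c0 x).
  { apply Rmult_le_compat_r; [lra|]. unfold Rdiv. apply Rmult_le_compat_r; [|lra].
    apply Rlt_le, Rinv_0_lt_compat; lra. }
  pose proof (Rabs_pos (Defs.c1 x)). pose proof (Rabs_pos (c2 x)). pose proof (Rabs_pos (c3 x)).
  split; [exact hx|]. split; [lra|]. split; [lra|]. split; [lra|].
  intros s1 s2 s3 h1 h2 h3. unfold mink, hexN; simpl.
  pose proof (sign_mul_le_abs s1 (Defs.c1 x) h1). pose proof (sign_mul_le_abs s2 (c2 x) h2).
  pose proof (sign_mul_le_abs s3 (c3 x) h3). lra.
Qed.

Definition rot_pi3 (s1 s2 s3 : R) (x : pt) : pt :=
  let dv := s1 * Defs.c1 x + s2 * c2 x + s3 * c3 x in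
  mkpt (c0 x)
    (Defs.c1 x / 2 + (s2 * c3 x - s3 * c2 x) / 2 + dv * s1 / 6)
    (c2 x / 2 + (s3 * Defs.c1 x - s1 * c3 x) / 2 + dv * s2 / 6)
    (c3 x / 2 + (s1 * c2 x - s2 * Defs.c1 x) / 2 + dv * s3 / 6).

Lemma rot_diag_pi3 (s1 s2 s3 : R) (x : pt) :
  rot (s1 / sqrt 3) (s2 / sqrt 3) (s3 / sqrt 3) (PI / 3) x = rot_pi3 s1 s2 s3 x.
Proof.
  assert (e : sqrt 3 * sqrt 3 = 3) by (apply sqrt_sqrt; lra).
  assert (sqrt 3 <> 0) by (intro z; rewrite z in e; lra).
  unfold rot, rot_pi3. rewrite cos_PI3, sin_PI3. f_equal.
  all: field_simplify; [|assumption..]; rewrite ?pow2_sqrt by lra; field.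
Qed.

Section FaceAntiprism.

Variables p r s1 s2 s3 : R.
Hypotheses (hs1 : is_sign s1) (hs2 : is_sign s2) (hs3 : is_sign s3).

Local Notation C := (cosh r).
Local Notation S := (sinh r).
Local Notation m := (hex_time p).
Local Notation N := (hexN p s1 s2 s3).
Local Notation k := (- (2 * (S - C * m) / (3 - m ^ 2))).
Local Notation v1 := (qv1 r s1).
Local Notation v2 := (qv2 r s2).
Local Notation v3 := (qv3 r s3).
Local Notation w1 := (reflrot p s1 s2 s3 v1).
Local Notation w2 := (reflrot p s1 s2 s3 v2).
Local Notation w3 := (reflrot p s1 s2 s3 v3).

Lemma mink_qv_qv : mink v1 v2 = - (C * C) /\ mink v2 v3 = - (C * C) /\ mink v3 v1 = - (C * C).
Proof. unfold mink; simpl. repeat split; ring. Qed.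

Lemma mink_qv_hexN : mink v1 N = S - C * m /\ mink v2 N = S - C * m /\ mink v3 N = S - C * m.
Proof.
  unfold mink, hexN, hex_time; simpl.
  destruct hs1 as [-> | ->], hs2 as [-> | ->], hs3 as [-> | ->]; repeat split; ring.
Qed.

Lemma reflrot_qv :
  w1 = rot_pi3 s1 s2 s3 (vadd v1 (vscale k N)) /\
  w2 = rot_pi3 s1 s2 s3 (vadd v2 (vscale k N)) /\
  w3 = rot_pi3 s1 s2 s3 (vadd v3 (vscale k N)).
Proof.
  unfold reflrot, refl. rewrite !rot_diag_pi3, mink_hexN_self by assumption.
  destruct mink_qv_hexN as (-> & -> & ->). repeat split.
Qed.

Hypothesis face_root : 3 * (tanh r - m) ^ 2 = tanh r ^ 2 * (3 - m ^ 2).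

Lemma refl_coef_mul : k * (S - C * m) = - (2 / 3) * (S * S).
Proof.
  pose proof (hex_time_sqr_lt_3 p). rewrite sinh_eq_tanh_mul_cosh.
  transitivity (- (2 / 3) * (C * C) * (3 * (tanh r - m) ^ 2) / (3 - m ^ 2)); [field; lra|].
  rewrite face_root. field. lra.
Qed.

Ltac lateral_mink :=
  pose proof refl_coef_mul as hk;
  destruct reflrot_qv as (-> & -> & ->);
  set (kk := - (2 * (S - C * m) / (3 - m ^ 2))) in *;
  change (hexN p s1 s2 s3) with (mkpt m s1 s2 s3);
  destruct hs1 as [-> | ->]; destruct hs2 as [-> | ->]; destruct hs3 as [-> | ->];
  unfold mink, rot_pi3, vadd, vscale; simpl; try lra.

Lemma mink_lateral_diag :
  mink v1 w1 = - (C * C) /\ mink v2 w2 = - (C * C) /\ mink v3 w3 = - (C * C).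
Proof. lateral_mink. Qed.

Lemma mink_lateral_even :
  s1 * s2 * s3 = 1 ->
  mink w1 v2 = - (C * C) /\ mink w2 v3 = - (C * C) /\ mink w3 v1 = - (C * C).
Proof. intro he. lateral_mink. Qed.

Lemma mink_lateral_odd :
  s1 * s2 * s3 = -1 ->
  mink v1 w2 = - (C * C) /\ mink v2 w3 = - (C * C) /\ mink v3 w1 = - (C * C).
Proof. intro ho. lateral_mink. Qed.

Lemma face_regular_antiprism : 0 < r -> regular_antiprism v1 v2 v3 w1 w2 w3.
Proof.
  intro hr. pose proof (one_lt_cosh_sqr r hr) as hC.
  destruct mink_qv_qv as (b12 & b23 & b31).
  assert (t12 : mink w1 w2 = - (C * C)) by now rewrite mink_reflrot.
  assert (t23 : mink w2 w3 = - (C * C)) by now rewrite mink_reflrot.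
  assert (t31 : mink w3 w1 = - (C * C)) by now rewrite mink_reflrot.
  destruct mink_lateral_diag as (l11 & l22 & l33).
  destruct (sign_mul _ _ (sign_mul _ _ hs1 hs2) hs3) as [he | ho].
  - destruct (mink_lateral_even he) as (l21 & l32 & l13).
    apply regular_antiprism_of_zigzag, (zigzag_of_mink (C * C)); assumption.
  - destruct (mink_lateral_odd ho) as (l12 & l23 & l31).
    rewrite mink_comm in l11, l22, l33.
    apply regular_antiprism_of_zigzag_rot, (zigzag_of_mink (C * C)); assumption.
Qed.

End FaceAntiprism.

Lemma face_tanh_root (p : R) : 0 < p ->
  exists T, 0 < T < 1 /\ T <= 2 * p / tp p /\
            3 * (T - hex_time p) ^ 2 = T ^ 2 * (3 - hex_time p ^ 2).
Proof.
  intro hp. pose proof (tp_sqr p) as ht2. pose proof (tp_pos p) as ht.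
  unfold hex_time. set (t := tp p) in *. set (q := sqrt (1 + 2 * p ^ 2)).
  assert (hq2 : q * q = 1 + 2 * p ^ 2) by (apply sqrt_sqrt; nra).
  assert (hq : 0 < q) by (apply sqrt_lt_R0; nra).
  (* (t - q) / p = 3 p / (t + q) is the smaller root of p T^2 - 2 t T + 3 p = 0,
     to which the equation reduces since t^2 - q^2 = 3 p^2. *)
  exists (3 * p / (t + q)). set (T := 3 * p / (t + q)).
  assert (hroot : p * T ^ 2 - 2 * t * T + 3 * p = 0).
  { transitivity (3 * p * (3 * p ^ 2 - t * t + q * q) / ((t + q) ^ 2)).
    - unfold T. field. lra.
    - rewrite ht2, hq2. field. lra. }
  assert (hT : 0 < T) by (apply Rdiv_lt_0_compat; lra).
  assert (hT2 : T <= 2 * p / t).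
  { assert (t <= 2 * q) by nra.
    assert (E : 2 * p / t - T = p * (2 * q - t) / (t * (t + q))) by (unfold T; field; lra).
    assert (0 <= p * (2 * q - t) / (t * (t + q))).
    { apply Rmult_le_pos; [nra | apply Rlt_le, Rinv_0_lt_compat; nra]. }
    lra. }
  assert (h2p : 2 * p / t < 1).
  { apply (Rmult_lt_reg_r t); [lra|]. unfold Rdiv. rewrite Rmult_assoc, Rinv_l by lra. nra. }
  split; [lra | split; [exact hT2|]].
  apply Rminus_diag_uniq.
  transitivity (9 * p / (t * t) * (p * T ^ 2 - 2 * t * T + 3 * p)); [field; lra|].
  rewrite hroot. ring.
Qed.

Theorem mainTheorem13 :
  forall (n : nat) (p a b c : R),
    (4 <= n)%nat ->
    isKP n p a b c ->
    exists r : R,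
      0 < r /\
      (* Q lies inside KP_{3,4}^n *)
      (forall x, inQ r x -> inKP p a b c x) /\
      (* for each face of Q, the regular antiprism over it has as top the
         image of the face under the reflection-rotation at the
         corresponding hexagonal face of KP *)
      (forall s1 s2 s3, is_sign s1 -> is_sign s2 -> is_sign s3 ->
         regular_antiprism
           (qv1 r s1) (qv2 r s2) (qv3 r s3)
           (reflrot p s1 s2 s3 (qv1 r s1))
           (reflrot p s1 s2 s3 (qv2 r s2))
           (reflrot p s1 s2 s3 (qv3 r s3))).
Proof.
  intros n p a b c _ [hp _].
  destruct (face_tanh_root p hp) as (T & hT & hTp & hroot).
  destruct (exists_tanh_eq T hT) as (r & hr & htanh).
  exists r. split; [exact hr | split].
  - intros x hx. left. apply (inQ_inTO p r); [lra | rewrite htanh; exact hTp | exact hx].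
  - intros s1 s2 s3 h1 h2 h3.
    apply face_regular_antiprism; [assumption.. | rewrite htanh; exact hroot | exact hr].
Qed.
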